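(* Let $\mathcal{G}$ be a finite simple graph, let $k\geq 1$, and let $\mathcal{G}^{k+1}$ be its $(k+1)$-core. Then for every $j\ge k$, every $j$-cycle of the clique complex $\widehat{\mathcal{G}}$ (i.e. every element of $\ker\partial_j$ in the simplicial chain complex $C_\bullet(\widehat{\mathcal{G}})$) is supported on simplices of $\widehat{\mathcal{G}^{k+1}}$, every $(j+1)$-simplex of $\widehat{\mathcal{G}}$ lies in $\widehat{\mathcal{G}^{k+1}}$, and consequently the inclusion $\widehat{\mathcal{G}^{k+1}}\hookrightarrow\widehat{\mathcal{G}}$ induces an isomorphism $H_j(\widehat{\mathcal{G}^{k+1}})\cong H_j(\widehat{\mathcal{G}})$.
   Context: For a graph $\mathcal{H}$, $\widehat{\mathcal{H}}$ denotes its clique (flag) complex, whose $r$-simplices are the sets of $r+1$ pairwise adjacent vertices. Homology is simplicial homology with coefficients in a fixed field. The $(k+1)$-core of $\mathcal{G}$ is the subgraph obtained by iteratively deleting vertices (with their incident edges) of degree less than $k+1$; equivalently, the largest induced subgraph in which every vertex has degree at least $k+1$. *)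

From mathcomp Require Import all_boot all_order all_algebra.
Set Implicit Arguments. Unset Strict Implicit. Unset Printing Implicit Defensive.
Import GRing.Theory.
Local Open Scope ring_scope.

(* A finite simple graph on the finType T is given by a symmetric irreflexive
   relation e.  A subgraph induced on a vertex set V : {set T} is (V, e). *)

Section Defs.
Variables (T : finType) (e : rel T).

(* (k+1)-core: iteratively delete vertices of degree < k1 (here k1 = k+1).
   One step deletes all currently low-degree vertices; #|T| steps suffice
   for stabilisation. *)
Definition core_step (k1 : nat) (X : {set T}) : {set T} :=
  [set v in X | (k1 <= #|[set u in X | e v u]|)%N].
Definition core (k1 : nat) : {set T} := iter #|T| (core_step k1) setT.

(* simplices of the clique complex of the subgraph induced on V:
   sets of pairwise adjacent vertices of V; an r-simplex has r+1 vertices. *)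
Definition is_clique (V : {set T}) (s : {set T}) : bool :=
  (s \subset V) && [forall u in s, forall v in s, (u != v) ==> e u v].
Definition is_simplex (V : {set T}) (r : nat) (s : {set T}) : bool :=
  is_clique V s && (#|s| == r.+1).

Variable F : fieldType.

(* simplicial chains with coefficients in F: finitely supported functions on
   simplices; an r-chain of the clique complex on V is a function on vertex
   sets supported on r-simplices. Simplices are oriented by the total order
   on T given by enum_rank. *)
Definition is_chain (V : {set T}) (r : nat) (c : {ffun {set T} -> F}) : Prop :=
  forall s, c s != 0 -> is_simplex V r s.

Definition bsign (v : T) (t : {set T}) : F :=
  (-1) ^+ #|[set u in t | (enum_rank u < enum_rank v)%N]|.

(* simplicial boundary: (d c)(t) = sum_{v notin t} sign * c(t + v),
   i.e. d [v_0,...,v_r] = sum_i (-1)^i [v_0,..,^v_i,..,v_r]. *)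
Definition bd (c : {ffun {set T} -> F}) : {ffun {set T} -> F} :=
  [ffun t => \sum_(v in ~: t) bsign v t * c (v |: t)].

Definition is_cycle (V : {set T}) (r : nat) (c : {ffun {set T} -> F}) : Prop :=
  is_chain V r c /\ bd c = 0.
Definition is_boundary (V : {set T}) (r : nat) (c : {ffun {set T} -> F}) : Prop :=
  exists d, is_chain V r.+1 d /\ bd d = c.

(* For W \subset V, the inclusion of clique complexes induces a map
   H_r(W) -> H_r(V), [z] |-> [z] (well defined since boundaries in W are
   boundaries in V).  It is an isomorphism iff it is injective and
   surjective on homology classes: *)
Definition inclusion_induces_iso (W V : {set T}) (r : nat) : Prop :=
  (forall z, is_cycle W r z -> is_boundary V r z -> is_boundary W r z) /\
  (forall z, is_cycle V r z ->
     exists z', is_cycle W r z' /\ is_boundary V r (z - z')).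

End Defs.

(* A vertex of degree at most k in the current graph cannot lie on a simplex
   of dimension j >= k that carries a cycle: its at least j neighbours inside
   that simplex are then all of its neighbours, so deleting another vertex w
   gives a face whose only coface in the support of the cycle is the simplex
   itself, and the boundary cannot vanish there.  Likewise every vertex of a
   (j+1)-simplex has j+1 >= k+1 neighbours inside it.  Hence neither kind of
   simplex loses a vertex during the pruning that produces the (k+1)-core, and
   the homology statement follows because all cycles and all bounding chains
   in degree j already live on the core. *)

From mathcomp Require Import all_boot all_order all_algebra.
Set Implicit Arguments. Unset Strict Implicit. Unset Printing Implicit Defensive.
Import GRing.Theory.
Local Open Scope ring_scope.

Section CliqueComplex.
Variables (T : finType) (e : rel T).

Lemma clique_sub_neighbours (V X s : {set T}) v :
  is_clique e V s -> s \subset X -> v \in s ->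
  s :\ v \subset [set u in X | e v u].
Proof.
case/andP=> _ /forallP cl sX vs; apply/subsetP => u; rewrite !inE => /andP[uv us].
rewrite (subsetP sX u us) /=.
by move/implyP: (cl v) => /(_ vs) /forallP /(_ u) /implyP /(_ us) /implyP; apply;
  rewrite eq_sym.
Qed.

Lemma simplex_restrict (V : {set T}) r s :
  is_simplex e setT r s -> s \subset V -> is_simplex e V r s.
Proof. by case/andP=> /andP[_ cl] cards sV; rewrite /is_simplex /is_clique sV cl. Qed.

Lemma clique_sub_core_step (V X s : {set T}) k1 :
  is_clique e V s -> s \subset X -> (k1 < #|s|)%N -> s \subset core_step e k1 X.
Proof.
move=> cl sX ks; apply/subsetP => v vs; rewrite inE (subsetP sX v vs) /=.
rewrite (cardsD1 v s) vs add1n ltnS in ks.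
exact: (leq_trans ks (subset_leq_card (clique_sub_neighbours cl sX vs))).
Qed.

Lemma sub_core (k1 : nat) (P : pred {set T}) :
  (forall X : {set T}, (forall s, P s -> s \subset X) ->
     forall s, P s -> s \subset core_step e k1 X) ->
  forall s, P s -> s \subset core e k1.
Proof.
move=> stepP; rewrite /core; elim: #|T| => [|n IH] s Ps; first exact: subsetT.
exact: stepP.
Qed.

Variable F : fieldType.

Lemma bd0_unique_coface (c : {ffun {set T} -> F}) (t : {set T}) w :
  bd c = 0 -> w \notin t -> (forall u, u \notin t -> u != w -> c (u |: t) = 0) ->
  c (w |: t) = 0.
Proof.
move=> /ffunP /(_ t) + wt others; rewrite !ffunE (bigD1 w) ?inE //= big1 ?addr0.
  by move/eqP; rewrite mulf_eq0 signr_eq0 => /eqP.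
by move=> u /andP[ut uw]; rewrite others -?in_setC // mulr0.
Qed.

Lemma bd0 : bd (0 : {ffun {set T} -> F}) = 0.
Proof. by apply/ffunP => t; rewrite !ffunE big1 // => u _; rewrite ffunE mulr0. Qed.

Lemma simplex_sub_core (V s : {set T}) k r :
  (k < r)%N -> is_simplex e V r s -> s \subset core e k.+1.
Proof.
move=> kr; apply: sub_core => X supp t tP; have /andP[cl /eqP ct] := tP.
by apply: clique_sub_core_step cl (supp t tP) _; rewrite ct ltnS.
Qed.

Section CycleSupport.
Variables (k j : nat).
Hypotheses (k_gt0 : (0 < k)%N) (kj : (k <= j)%N).

Lemma cycle_support_sub_core_step (c : {ffun {set T} -> F}) (X : {set T}) :
  is_cycle e setT j c -> (forall s, c s != 0 -> s \subset X) ->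
  forall s, c s != 0 -> s \subset core_step e k.+1 X.
Proof.
move=> [ch bdc0] supp s cs; have /andP[cl /eqP cards] := ch s cs; have sX := supp s cs.
apply/subsetP => v vs; rewrite inE (subsetP sX v vs) /= leqNgt ltnS; apply/negP => low.
set N := [set u in X | e v u] in low.
have cardsv : #|s :\ v| = j by move: cards; rewrite (cardsD1 v s) vs add1n => -[].
have eqN : s :\ v = N.
  apply/eqP; rewrite eqEcard (clique_sub_neighbours cl sX vs) cardsv.
  exact: leq_trans low kj.
have [w] : exists w, w \in s :\ v.
  by apply/card_gt0P; rewrite cardsv (leq_trans k_gt0 kj).
rewrite !inE => /andP[wv ws]; apply: (negP cs); rewrite -(setD1K ws); apply/eqP.
(* [s] is the only coface of [s :\ w] in the support: the others contain [v]. *)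
apply: (bd0_unique_coface bdc0); first by rewrite !inE eqxx.
move=> u ut uw; apply/eqP/negPn/negP => cu.
have vt : v \in s :\ w by rewrite !inE eq_sym wv.
have /andP[clu _] := ch _ cu.
have uv : u != v by apply: contraNneq ut => ->.
have : u \in N.
  apply: (subsetP (clique_sub_neighbours clu (supp _ cu) (setU1r _ vt))).
  by rewrite !inE uv eqxx.
by rewrite -eqN !inE uv /= => us; move: ut; rewrite !inE us uw.
Qed.

Lemma cycle_support_sub_core (c : {ffun {set T} -> F}) :
  is_cycle e setT j c -> forall s, c s != 0 -> s \subset core e k.+1.
Proof. by move=> cyc; apply: sub_core => X; apply: cycle_support_sub_core_step. Qed.

End CycleSupport.

Lemma inclusion_iso_of_supports (W : {set T}) j :
  (forall c : {ffun {set T} -> F}, is_cycle e setT j c -> is_chain e W j c) ->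
  (forall s, is_simplex e setT j.+1 s -> is_simplex e W j.+1 s) ->
  inclusion_induces_iso e F W setT j.
Proof.
move=> cycW simpW; split.
  by move=> z _ [d [dch dbd]]; exists d; split=> // s ds; apply/simpW/dch.
move=> z zc; exists z; split; first by split; [exact: cycW | exact: zc.2].
by exists 0; split; [move=> s; rewrite ffunE eqxx | rewrite subrr bd0].
Qed.

End CliqueComplex.

Theorem mainTheorem2 (F : fieldType) (T : finType) (e : rel T)
  (e_sym : symmetric e) (e_irr : irreflexive e) (k j : nat)
  (hk : (1 <= k)%N) (hj : (k <= j)%N) :
  let C := core e k.+1 in
  (forall c : {ffun {set T} -> F}, is_cycle e setT j c ->
     forall s, c s != 0 -> is_simplex e C j s) /\
  (forall s, is_simplex e setT j.+1 s -> is_simplex e C j.+1 s) /\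
  inclusion_induces_iso e F C setT j.
Proof.
move=> C.
have cycC (c : {ffun {set T} -> F}) : is_cycle e setT j c -> is_chain e C j c.
  move=> cyc s cs; apply: simplex_restrict (cyc.1 s cs) _.
  by rewrite /C (cycle_support_sub_core hk hj cyc cs).
have simpC s : is_simplex e setT j.+1 s -> is_simplex e C j.+1 s.
  by move=> ss; rewrite simplex_restrict // /C (simplex_sub_core _ ss).
by split; [|split]; [exact: cycC | exact: simpC | exact: inclusion_iso_of_supports].
Qed.
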